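(* Let $\mathcal P$ be a 2-reflex orthostack made of four bricks with canonical contact rectangles, all three of which have type $1$ (i.e., its signature is $s_1s_2s_3$ with each $s_t\in\{\sqcup_1,\sqcap_1\}$). Then $\mathcal P$ is guarded by a single vertical closed face guard.
   Context: A 2-reflex orthostack is an orthogonal polyhedron with no reflex edge parallel to the vertical ($z$) axis all of whose horizontal cross-sections are simply connected; it is a stack of bricks $B_t=R_t\times[z_{t-1},z_t]$, $t=1,\dots,k$ (bottom to top), $z_0<\dots<z_k$, each $R_t$ an axis-parallel rectangle, $R_t\ne R_{t+1}$. The contact rectangle between $B_t$ and $B_{t+1}$ is $(R_t\cap R_{t+1})\times\{z_t\}$; it is canonical if one of $R_t,R_{t+1}$ is strictly contained in the other and their set difference is connected. The type of a canonical contact rectangle is the number $i\in\{1,2,3,4\}$ of sides of the smaller rectangle not contained in the boundary of the larger one. The contact is denoted $\sqcup_i$ if $R_t\subsetneq R_{t+1}$ and $\sqcap_i$ if $R_{t+1}\subsetneq R_t$. The signature is the sequence of these symbols for $t=1,\dots,k-1$, read bottom to top. A point $x$ is visible to $y$ if segment $xy$ does not meet the exterior of the polyhedron; a closed face guard is a face including its boundary; it guards the polyhedron if every point is visible from some point of it. A face is vertical if parallel to the $z$-axis. *)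

From Stdlib Require Import Reals.
Open Scope R_scope.

Record pt : Type := Pt { px : R; py : R; pz : R }.

Record rect : Type := Rect { rx1 : R; rx2 : R; ry1 : R; ry2 : R }.

Definition rect_ok (r : rect) : Prop := rx1 r < rx2 r /\ ry1 r < ry2 r.

Definition rect_sub (r r' : rect) : Prop :=
  rx1 r' <= rx1 r /\ rx2 r <= rx2 r' /\ ry1 r' <= ry1 r /\ ry2 r <= ry2 r'.

(** Canonical contact of type 1 where [r] is the smaller rectangle and [r']
    the larger one: r is strictly contained in r' and exactly one of the four
    sides of r is not contained in the boundary of r'.  For r contained in r',
    the left side {rx1 r} x [ry1 r, ry2 r] lies in the boundary of r' iff
    rx1 r = rx1 r' (similarly for the other sides).  The remaining condition of
    canonicity (r' \ r connected) is automatic when three sides are shared. *)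
Definition canon_type1 (r r' : rect) : Prop :=
  rect_sub r r' /\
  ( (rx1 r' < rx1 r /\ rx2 r = rx2 r' /\ ry1 r = ry1 r' /\ ry2 r = ry2 r')
  \/ (rx1 r = rx1 r' /\ rx2 r < rx2 r' /\ ry1 r = ry1 r' /\ ry2 r = ry2 r')
  \/ (rx1 r = rx1 r' /\ rx2 r = rx2 r' /\ ry1 r' < ry1 r /\ ry2 r = ry2 r')
  \/ (rx1 r = rx1 r' /\ rx2 r = rx2 r' /\ ry1 r = ry1 r' /\ ry2 r < ry2 r') ).

(** Contact between R_t (below) and R_{t+1} (above) is canonical of type 1:
    either a "cup_1" (R_t strictly inside R_{t+1}) or a "cap_1"
    (R_{t+1} strictly inside R_t). *)
Definition contact_type1 (lower upper : rect) : Prop :=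
  canon_type1 lower upper \/ canon_type1 upper lower.

(** The orthostack made of bricks B_t = R_t x [z_{t-1}, z_t], t = 1..k,
    as a (closed) subset of R^3. *)
Definition stack (k : nat) (Rs : nat -> rect) (z : nat -> R) (p : pt) : Prop :=
  exists t : nat, (1 <= t <= k)%nat /\
    rx1 (Rs t) <= px p <= rx2 (Rs t) /\
    ry1 (Rs t) <= py p <= ry2 (Rs t) /\
    z (t - 1)%nat <= pz p <= z t.

Definition stack_ok (k : nat) (Rs : nat -> rect) (z : nat -> R) : Prop :=
  (forall t, (1 <= t <= k)%nat -> rect_ok (Rs t)) /\
  (forall t, (t < k)%nat -> z t < z (S t)).

Definition dist_inf (p q : pt) : R :=
  Rmax (Rabs (px p - px q)) (Rmax (Rabs (py p - py q)) (Rabs (pz p - pz q))).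

Definition visible (P : pt -> Prop) (x y : pt) : Prop :=
  forall l : R, 0 <= l <= 1 ->
    P (Pt (px x + l * (px y - px x)) (py x + l * (py y - py x))
          (pz x + l * (pz y - pz x))).

Definition guards (P F : pt -> Prop) : Prop :=
  forall p, P p -> exists f, F f /\ visible P f p.

Inductive vaxis : Type := AxX | AxY.

Definition vcoord (a : vaxis) (p : pt) : R :=
  match a with AxX => px p | AxY => py p end.

(** Relative-interior points of vertical faces lying in the plane
    {vcoord a = c} with P locally on the side [vcoord a <= c] (if [s] is true)
    or [vcoord a >= c] (if [s] is false): near q, P coincides with the closed
    half-space. *)
Definition face_interior (P : pt -> Prop) (a : vaxis) (c : R) (s : bool)
  (q : pt) : Prop :=
  vcoord a q = c /\
  exists eps : R, 0 < eps /\
    forall r : pt, dist_inf r q < eps ->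
      (P r <-> (if s then vcoord a r <= c else c <= vcoord a r)).

Definition path_in (S : pt -> Prop) (p q : pt) : Prop :=
  exists f : R -> pt,
    continuity (fun t => px (f t)) /\ continuity (fun t => py (f t)) /\
    continuity (fun t => pz (f t)) /\
    f 0 = p /\ f 1 = q /\ forall t, 0 <= t <= 1 -> S (f t).

Definition closure (S : pt -> Prop) (x : pt) : Prop :=
  forall eps : R, 0 < eps -> exists y, S y /\ dist_inf x y < eps.

(** F is a closed vertical face of P: the closure of a connected component of
    the relative interior of a face lying in a vertical plane. *)
Definition vertical_face (P F : pt -> Prop) : Prop :=
  exists (a : vaxis) (c : R) (s : bool) (p0 : pt),
    face_interior P a c s p0 /\
    forall x, F x <-> closure (fun q => face_interior P a c s q /\
                                         path_in (face_interior P a c s) p0 q) x.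

From Stdlib Require Import Reals Lra Lia.
Open Scope R_scope.

(* A canonical contact of type 1 changes exactly one of the four
   side coordinates (x-min, x-max, y-min, y-max) of the rectangle, keeping the
   other three.  Three such contacts change at most three of the four sides,
   so some side is common to all four rectangles: the stack has a "wall", a
   vertical plane containing one side of every brick, with the whole stack on
   one side of it.  The part of that plane bounding the stack is a single
   connected face: the midpoint of the side of brick t is joined to that of
   brick t+1 through the overlap of the two sides, which is non-empty because
   consecutive rectangles are nested.  The closure of this face contains the
   side midpoint of every brick, and a brick, being convex, is seen entirely
   from any of its points. *)

(** * Paths *)

(* A continuous clamp of u to [0,1]: 0 below 0, u on [0,1], 1 above 1. *)
Definition clamp (u : R) : R := (Rabs u - Rabs (u - 1) + 1) / 2.

Lemma clamp_continuous : continuity clamp.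
Proof.
  assert (Habs1 : continuity (fun u => Rabs (u - 1))).
  { change (continuity (comp Rabs (fun u => u - 1))).
    apply continuity_comp; [reg | apply Rcontinuity_abs]. }
  intro x; unfold clamp.
  apply continuity_pt_mult; [| apply continuity_pt_const; intros ?; reflexivity].
  apply continuity_pt_plus; [| apply continuity_pt_const; intros ?; reflexivity].
  apply continuity_pt_minus; [apply Rcontinuity_abs | apply Habs1].
Qed.

Lemma clamp_below u : u <= 0 -> clamp u = 0.
Proof. intros; unfold clamp, Rabs; destruct Rcase_abs; destruct Rcase_abs; lra. Qed.

Lemma clamp_between u : 0 <= u <= 1 -> clamp u = u.
Proof. intros; unfold clamp, Rabs; destruct Rcase_abs; destruct Rcase_abs; lra. Qed.

Lemma clamp_above u : 1 <= u -> clamp u = 1.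
Proof. intros; unfold clamp, Rabs; destruct Rcase_abs; destruct Rcase_abs; lra. Qed.

(* One coordinate of the concatenation of two paths f, g meeting at q:
   run f on [0,1/2], then g on [1/2,1]. *)
Lemma concat_coord_continuous (pr : pt -> R) (f g : R -> pt) (q : pt) :
  continuity (fun t => pr (f t)) -> continuity (fun t => pr (g t)) ->
  continuity (fun t => pr (f (clamp (2 * t))) + pr (g (clamp (2 * t - 1))) - pr q).
Proof.
  intros Hf Hg.
  assert (Hre : forall (h : R -> pt) (inner : R -> R), continuity (fun t => pr (h t)) ->
            continuity inner -> continuity (fun t => pr (h (clamp (inner t))))).
  { intros h inner Hh Hinner.
    change (continuity (comp (comp (fun t => pr (h t)) clamp) inner)).
    apply continuity_comp; [exact Hinner |].
    apply continuity_comp; [apply clamp_continuous | exact Hh]. }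
  intro x; apply continuity_pt_minus; [| apply continuity_pt_const; intros ?; reflexivity].
  apply continuity_pt_plus; [apply (Hre f) | apply (Hre g)]; auto; reg.
Qed.

Lemma path_trans (S : pt -> Prop) (p q r : pt) :
  path_in S p q -> path_in S q r -> path_in S p r.
Proof.
  intros [f (fx & fy & fz & f0 & f1 & fS)] [g (gx & gy & gz & g0 & g1 & gS)].
  exists (fun t => Pt (px (f (clamp (2 * t))) + px (g (clamp (2 * t - 1))) - px q)
                   (py (f (clamp (2 * t))) + py (g (clamp (2 * t - 1))) - py q)
                   (pz (f (clamp (2 * t))) + pz (g (clamp (2 * t - 1))) - pz q)).
  simpl; split; [now apply concat_coord_continuous |].
  split; [now apply concat_coord_continuous |].
  split; [now apply concat_coord_continuous |].
  split; [| split].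
  - rewrite clamp_between, clamp_below by lra.
    replace (2 * 0) with 0 by ring; rewrite f0, g0.
    destruct p; simpl; f_equal; ring.
  - rewrite clamp_above, clamp_between by lra.
    replace (2 * 1 - 1) with 1 by ring; rewrite f1, g1.
    destruct r; simpl; f_equal; ring.
  - intros t Ht; destruct (Rle_lt_dec t (1 / 2)).
    + rewrite (clamp_between (2 * t)), (clamp_below (2 * t - 1)), g0 by lra.
      replace (Pt _ _ _) with (f (2 * t)); [apply fS; lra |].
      destruct (f (2 * t)); simpl; f_equal; ring.
    + rewrite (clamp_above (2 * t)), (clamp_between (2 * t - 1)), f1 by lra.
      replace (Pt _ _ _) with (g (2 * t - 1)); [apply gS; lra |].
      destruct (g (2 * t - 1)); simpl; f_equal; ring.
Qed.

Definition segpt (p q : pt) (l : R) : pt :=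
  Pt (px p + l * (px q - px p)) (py p + l * (py q - py p)) (pz p + l * (pz q - pz p)).

Lemma segment_path (S : pt -> Prop) (p q : pt) :
  (forall l, 0 <= l <= 1 -> S (segpt p q l)) -> path_in S p q.
Proof.
  intros H; exists (segpt p q); unfold segpt; simpl.
  do 3 (split; [reg |]).
  split; [destruct p; simpl; f_equal; ring |].
  split; [destruct p, q; simpl; f_equal; ring | exact H].
Qed.

Lemma path_refl (S : pt -> Prop) (p : pt) : S p -> path_in S p p.
Proof.
  intros Hp; apply segment_path; intros l _.
  replace (segpt p p l) with p; [exact Hp |].
  destruct p; unfold segpt; simpl; f_equal; ring.
Qed.

Lemma path_mono (S T : pt -> Prop) (p q : pt) :
  (forall x, S x -> T x) -> path_in S p q -> path_in T p q.
Proof.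
  intros HST [f (fx & fy & fz & f0 & f1 & fS)].
  exists f; repeat split; auto.
Qed.

Lemma comb_closed (lo hi x y l : R) :
  lo <= x <= hi -> lo <= y <= hi -> 0 <= l <= 1 -> lo <= x + l * (y - x) <= hi.
Proof. intros; split; nra. Qed.

Lemma comb_open (lo hi x y l : R) :
  lo < x < hi -> lo < y < hi -> 0 <= l <= 1 -> lo < x + l * (y - x) < hi.
Proof. intros; destruct (Rle_lt_dec l (1 / 2)); split; nra. Qed.

(** * Neighbourhoods for the sup distance *)

Definition near (q : pt) (P : pt -> Prop) : Prop :=
  exists e, 0 < e /\ forall r, dist_inf r q < e -> P r.

Lemma near_impl (q : pt) (P Q : pt -> Prop) :
  (forall r, P r -> Q r) -> near q P -> near q Q.
Proof. intros HPQ (e & He & HP); exists e; auto. Qed.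

Lemma near_and (q : pt) (P Q : pt -> Prop) :
  near q P -> near q Q -> near q (fun r => P r /\ Q r).
Proof.
  intros (e1 & He1 & HP) (e2 & He2 & HQ).
  exists (Rmin e1 e2); split; [now apply Rmin_glb_lt |].
  intros r Hr; split.
  - apply HP; eapply Rlt_le_trans; [exact Hr | apply Rmin_l].
  - apply HQ; eapply Rlt_le_trans; [exact Hr | apply Rmin_r].
Qed.

Lemma near_between (f : pt -> R) (q : pt) (lo hi : R) :
  (forall r, Rabs (f r - f q) <= dist_inf r q) ->
  lo < f q < hi -> near q (fun r => lo < f r < hi).
Proof.
  intros Hlip Hq.
  exists (Rmin (f q - lo) (hi - f q)); split; [apply Rmin_glb_lt; lra |].
  intros r Hr.
  pose proof (Rmin_l (f q - lo) (hi - f q)); pose proof (Rmin_r (f q - lo) (hi - f q)).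
  assert (Hd : Rabs (f r - f q) < Rmin (f q - lo) (hi - f q))
    by (eapply Rle_lt_trans; [apply Hlip | exact Hr]).
  apply Rabs_def2 in Hd; lra.
Qed.

Lemma lipschitz_vcoord (a : vaxis) (r q : pt) :
  Rabs (vcoord a r - vcoord a q) <= dist_inf r q.
Proof.
  unfold dist_inf; destruct a; simpl; [apply Rmax_l |].
  eapply Rle_trans; [apply Rmax_l | apply Rmax_r].
Qed.

Lemma lipschitz_pz (r q : pt) : Rabs (pz r - pz q) <= dist_inf r q.
Proof.
  unfold dist_inf; eapply Rle_trans; [apply Rmax_r | apply Rmax_r].
Qed.

Definition on_side (s : bool) (c x : R) : Prop := if s then x <= c else c <= x.

Lemma face_interior_of_near (P : pt -> Prop) (a : vaxis) (c : R) (s : bool) (q : pt) :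
  (forall r, P r -> on_side s c (vcoord a r)) -> vcoord a q = c ->
  near q (fun r => on_side s c (vcoord a r) -> P r) -> face_interior P a c s q.
Proof.
  intros Hside Hq (e & He & Hfill); split; [exact Hq |].
  exists e; split; [exact He |]; intros r Hr; split; [apply Hside | apply Hfill; exact Hr].
Qed.

Lemma closure_of_mem (S : pt -> Prop) (x : pt) : S x -> closure S x.
Proof.
  intros Hx eps Heps; exists x; split; [exact Hx |].
  unfold dist_inf; rewrite !Rminus_diag, Rabs_R0, (Rmax_left 0 0), Rmax_left; lra.
Qed.

(** * Sides of rectangles and bricks *)

Definition side (a : vaxis) (s : bool) (r : rect) : R :=
  match a, s with
  | AxX, false => rx1 r | AxX, true => rx2 r
  | AxY, false => ry1 r | AxY, true => ry2 r
  end.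

Definition other (a : vaxis) : vaxis := match a with AxX => AxY | AxY => AxX end.

Definition wpt (a : vaxis) (c u w : R) : pt :=
  match a with AxX => Pt c u w | AxY => Pt u c w end.

Lemma wpt_vcoord (a : vaxis) (c u w : R) : vcoord a (wpt a c u w) = c.
Proof. now destruct a. Qed.

Lemma wpt_other (a : vaxis) (c u w : R) : vcoord (other a) (wpt a c u w) = u.
Proof. now destruct a. Qed.

Lemma wpt_pz (a : vaxis) (c u w : R) : pz (wpt a c u w) = w.
Proof. now destruct a. Qed.

Lemma vcoord_segpt (a : vaxis) (p q : pt) (l : R) :
  vcoord a (segpt p q l) = vcoord a p + l * (vcoord a q - vcoord a p).
Proof. now destruct a. Qed.

Lemma rect_ok_side (a : vaxis) (r : rect) : rect_ok r -> side a false r < side a true r.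
Proof. unfold rect_ok; destruct a; simpl; tauto. Qed.

Lemma nested_overlap (b : vaxis) (r r' : rect) :
  rect_ok r -> rect_ok r' -> rect_sub r r' \/ rect_sub r' r ->
  Rmax (side b false r) (side b false r') < Rmin (side b true r) (side b true r').
Proof.
  unfold rect_ok, rect_sub, Rmax, Rmin; intros Hr Hr' Hsub.
  destruct Rle_dec, Rle_dec, b; simpl in *; lra.
Qed.

Definition in_column (r : rect) (p : pt) : Prop :=
  rx1 r <= px p <= rx2 r /\ ry1 r <= py p <= ry2 r.

Lemma in_column_axis (a : vaxis) (r : rect) (p : pt) :
  in_column r p <->
  side a false r <= vcoord a p <= side a true r /\
  side (other a) false r <= vcoord (other a) p <= side (other a) true r.
Proof. unfold in_column; destruct a; simpl; tauto. Qed.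

Lemma near_column (a : vaxis) (s : bool) (c : R) (r : rect) (q : pt) :
  rect_ok r -> side a s r = c -> vcoord a q = c ->
  side (other a) false r < vcoord (other a) q < side (other a) true r ->
  near q (fun p => on_side s c (vcoord a p) -> in_column r p).
Proof.
  intros Hr Hc Hq Htan.
  set (w := side a true r - side a false r).
  assert (Hw : 0 < w) by (pose proof (rect_ok_side a r Hr); unfold w; lra).
  apply (near_impl _ (fun p => side (other a) false r < vcoord (other a) p
                                 < side (other a) true r
                               /\ c - w < vcoord a p < c + w)).
  - intros p [Hpt Hpn] Hs; apply (in_column_axis a); split; [| lra].
    unfold on_side, w in *; subst c; destruct s; simpl in *; lra.
  - apply near_and; apply near_between; auto using lipschitz_vcoord; lra.
Qed.

Section Stack.

Variables (k : nat) (Rs : nat -> rect) (z : nat -> R).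

Lemma stack_intro (t : nat) (p : pt) :
  (1 <= t <= k)%nat -> in_column (Rs t) p -> z (t - 1)%nat <= pz p <= z t ->
  stack k Rs z p.
Proof. intros Ht [Hx Hy] Hz; exists t; auto. Qed.

Lemma stack_elim (p : pt) :
  stack k Rs z p ->
  exists t, (1 <= t <= k)%nat /\ in_column (Rs t) p /\ z (t - 1)%nat <= pz p <= z t.
Proof. intros (t & Ht & Hx & Hy & Hz); exists t; unfold in_column; tauto. Qed.

Lemma visible_in_brick (t : nat) (p q : pt) :
  (1 <= t <= k)%nat ->
  in_column (Rs t) p -> z (t - 1)%nat <= pz p <= z t ->
  in_column (Rs t) q -> z (t - 1)%nat <= pz q <= z t ->
  visible (stack k Rs z) p q.
Proof.
  intros Ht [Hpx Hpy] Hpz [Hqx Hqy] Hqz l Hl.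
  apply (stack_intro t); [exact Ht | split |]; simpl; auto using comb_closed.
Qed.

End Stack.

(** * The face on a wall of a stack *)

Definition wall (k : nat) (Rs : nat -> rect) (a : vaxis) (s : bool) (c : R) : Prop :=
  forall t, (1 <= t <= k)%nat -> side a s (Rs t) = c.

Definition nested (k : nat) (Rs : nat -> rect) : Prop :=
  forall t, (1 <= t < k)%nat -> rect_sub (Rs t) (Rs (S t)) \/ rect_sub (Rs (S t)) (Rs t).

Definition wall_region (a : vaxis) (c u1 u2 w1 w2 : R) (q : pt) : Prop :=
  vcoord a q = c /\ u1 < vcoord (other a) q < u2 /\ w1 < pz q < w2.

Lemma wall_region_path (a : vaxis) (c u1 u2 w1 w2 : R) (p q : pt) :
  wall_region a c u1 u2 w1 w2 p -> wall_region a c u1 u2 w1 w2 q ->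
  path_in (wall_region a c u1 u2 w1 w2) p q.
Proof.
  intros (Hpv & Hpu & Hpw) (Hqv & Hqu & Hqw); apply segment_path; intros l Hl.
  unfold wall_region; rewrite !vcoord_segpt, Hpv, Hqv; simpl.
  split; [ring | split; apply comb_open; auto].
Qed.

Section WallFace.

Variables (k : nat) (Rs : nat -> rect) (z : nat -> R) (a : vaxis) (s : bool) (c : R).
Hypothesis Hok : stack_ok k Rs z.
Hypothesis Hwall : wall k Rs a s c.
Hypothesis Hnested : nested k Rs.

Let FI : pt -> Prop := face_interior (stack k Rs z) a c s.

Definition tan_lo (t : nat) : R := side (other a) false (Rs t).
Definition tan_hi (t : nat) : R := side (other a) true (Rs t).

Lemma stack_on_side (p : pt) : stack k Rs z p -> on_side s c (vcoord a p).
Proof.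
  intros Hp; destruct (stack_elim k Rs z p Hp) as (t & Ht & Hcol & _).
  apply (in_column_axis a) in Hcol as [Hn _].
  rewrite <- (Hwall t Ht); destruct s; simpl; lra.
Qed.

Lemma brick_height (t : nat) : (1 <= t <= k)%nat -> z (t - 1)%nat < z t.
Proof.
  intros Ht; destruct t as [| t]; [lia |].
  replace (S t - 1)%nat with t by lia; apply Hok; lia.
Qed.

Lemma tan_lt (t : nat) : (1 <= t <= k)%nat -> tan_lo t < tan_hi t.
Proof. intros Ht; apply rect_ok_side, Hok, Ht. Qed.

Lemma face_interior_brick (t : nat) (q : pt) :
  (1 <= t <= k)%nat -> wall_region a c (tan_lo t) (tan_hi t) (z (t - 1)%nat) (z t) q ->
  FI q.
Proof.
  intros Ht (Hv & Hu & Hz).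
  apply face_interior_of_near; [exact stack_on_side | exact Hv |].
  apply (near_impl _ (fun p => (on_side s c (vcoord a p) ->
                                in_column (Rs t) p) /\ z (t - 1)%nat < pz p < z t)).
  - intros p [Hcol Hh] Hs; apply (stack_intro k Rs z t); auto; lra.
  - apply near_and; [apply near_column; auto; apply Hok, Ht |].
    apply near_between; auto using lipschitz_pz.
Qed.

Lemma face_interior_contact (t : nat) (q : pt) :
  (1 <= t < k)%nat ->
  wall_region a c (Rmax (tan_lo t) (tan_lo (S t))) (Rmin (tan_hi t) (tan_hi (S t)))
    (z (t - 1)%nat) (z (S t)) q ->
  FI q.
Proof.
  intros Ht (Hv & [Hlo Hhi] & Hz).
  apply Rmax_Rlt in Hlo as [Hlo1 Hlo2]; apply Rmin_Rgt in Hhi as [Hhi1 Hhi2].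
  assert (Hw1 := Hwall t ltac:(lia)); assert (Hw2 := Hwall (S t) ltac:(lia)).
  apply face_interior_of_near; [exact stack_on_side | exact Hv |].
  apply (near_impl _ (fun p => (on_side s c (vcoord a p) -> in_column (Rs t) p) /\
                               (on_side s c (vcoord a p) -> in_column (Rs (S t)) p) /\
                               z (t - 1)%nat < pz p < z (S t))).
  - intros p (Hcol1 & Hcol2 & Hh) Hs; destruct (Rle_lt_dec (pz p) (z t)).
    + apply (stack_intro k Rs z t); auto; lia || lra.
    + apply (stack_intro k Rs z (S t)); auto; [lia |].
      replace (S t - 1)%nat with t by lia; lra.
  - unfold tan_lo, tan_hi in *.
    apply near_and; [| apply near_and].
    + apply near_column; [apply Hok; lia | exact Hw1 | exact Hv | lra].
    + apply near_column; [apply Hok; lia | exact Hw2 | exact Hv | lra].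
    + apply near_between; auto using lipschitz_pz.
Qed.

Lemma brick_path (t : nat) (p q : pt) :
  (1 <= t <= k)%nat ->
  wall_region a c (tan_lo t) (tan_hi t) (z (t - 1)%nat) (z t) p ->
  wall_region a c (tan_lo t) (tan_hi t) (z (t - 1)%nat) (z t) q ->
  path_in FI p q.
Proof.
  intros Ht Hp Hq; eapply path_mono; [| apply wall_region_path; [exact Hp | exact Hq]].
  intros x Hx; exact (face_interior_brick t x Ht Hx).
Qed.

Lemma contact_path (t : nat) (p q : pt) :
  (1 <= t < k)%nat ->
  wall_region a c (Rmax (tan_lo t) (tan_lo (S t))) (Rmin (tan_hi t) (tan_hi (S t)))
    (z (t - 1)%nat) (z (S t)) p ->
  wall_region a c (Rmax (tan_lo t) (tan_lo (S t))) (Rmin (tan_hi t) (tan_hi (S t)))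
    (z (t - 1)%nat) (z (S t)) q ->
  path_in FI p q.
Proof.
  intros Ht Hp Hq; eapply path_mono; [| apply wall_region_path; [exact Hp | exact Hq]].
  intros x Hx; exact (face_interior_contact t x Ht Hx).
Qed.

Definition mid (t : nat) : pt :=
  wpt a c ((tan_lo t + tan_hi t) / 2) ((z (t - 1)%nat + z t) / 2).

Lemma mid_region (t : nat) :
  (1 <= t <= k)%nat ->
  wall_region a c (tan_lo t) (tan_hi t) (z (t - 1)%nat) (z t) (mid t).
Proof.
  intros Ht; pose proof (tan_lt t Ht); pose proof (brick_height t Ht).
  unfold wall_region, mid; rewrite wpt_vcoord, wpt_other, wpt_pz; repeat split; lra.
Qed.

(* The centres of consecutive sides are joined through the contact, where the
   two sides overlap because the rectangles are nested. *)
Lemma mid_link (t : nat) : (1 <= t < k)%nat -> path_in FI (mid t) (mid (S t)).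
Proof.
  intros Ht.
  assert (Hov : Rmax (tan_lo t) (tan_lo (S t)) < Rmin (tan_hi t) (tan_hi (S t))).
  { apply nested_overlap; [apply Hok; lia | apply Hok; lia | apply Hnested, Ht]. }
  pose proof (brick_height t ltac:(lia)) as Hz1.
  pose proof (brick_height (S t) ltac:(lia)) as Hz2.
  replace (S t - 1)%nat with t in Hz2 by lia.
  pose proof (Rmax_l (tan_lo t) (tan_lo (S t))); pose proof (Rmax_r (tan_lo t) (tan_lo (S t))).
  pose proof (Rmin_l (tan_hi t) (tan_hi (S t))); pose proof (Rmin_r (tan_hi t) (tan_hi (S t))).
  set (u := (Rmax (tan_lo t) (tan_lo (S t)) + Rmin (tan_hi t) (tan_hi (S t))) / 2).
  set (below := wpt a c u ((z (t - 1)%nat + z t) / 2)).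
  set (above := wpt a c u ((z t + z (S t)) / 2)).
  assert (Hbelow : wall_region a c (tan_lo t) (tan_hi t) (z (t - 1)%nat) (z t) below).
  { unfold wall_region, below, u; rewrite wpt_vcoord, wpt_other, wpt_pz; repeat split; lra. }
  assert (Habove : wall_region a c (tan_lo (S t)) (tan_hi (S t)) (z (S t - 1)%nat) (z (S t))
                     above).
  { replace (S t - 1)%nat with t by lia.
    unfold wall_region, above, u; rewrite wpt_vcoord, wpt_other, wpt_pz; repeat split; lra. }
  apply path_trans with below.
  { apply (brick_path t); [lia | apply mid_region; lia | exact Hbelow]. }
  apply path_trans with above.
  - apply (contact_path t); [exact Ht | |].
    + unfold wall_region, below, u; rewrite wpt_vcoord, wpt_other, wpt_pz; repeat split; lra.
    + unfold wall_region, above, u; rewrite wpt_vcoord, wpt_other, wpt_pz; repeat split; lra.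
  - apply (brick_path (S t)); [lia | exact Habove | apply mid_region; lia].
Qed.

Lemma mid_chain (t : nat) : (1 <= t <= k)%nat -> path_in FI (mid 1) (mid t).
Proof.
  induction t as [| t IH]; intros Ht; [lia |].
  destruct (Nat.eq_dec t 0) as [-> | Hnz].
  - apply path_refl, (face_interior_brick 1); [lia | apply mid_region; lia].
  - apply path_trans with (mid t); [apply IH; lia | apply mid_link; lia].
Qed.

Lemma mid_in_brick (t : nat) :
  (1 <= t <= k)%nat -> in_column (Rs t) (mid t) /\ z (t - 1)%nat <= pz (mid t) <= z t.
Proof.
  intros Ht; destruct (mid_region t Ht) as (Hv & Hu & Hh).
  pose proof (rect_ok_side a (Rs t) (proj1 Hok t Ht)); pose proof (Hwall t Ht).
  split; [apply (in_column_axis a) | lra].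
  unfold tan_lo, tan_hi in Hu; split; [| lra].
  rewrite Hv; destruct s; lra.
Qed.

Theorem wall_face_guards :
  (1 <= k)%nat ->
  exists F : pt -> Prop, vertical_face (stack k Rs z) F /\ guards (stack k Rs z) F.
Proof.
  intros Hk; exists (closure (fun q => FI q /\ path_in FI (mid 1) q)); split.
  - exists a, c, s, (mid 1); split; [| tauto].
    apply (face_interior_brick 1); [lia | apply mid_region; lia].
  - intros p Hp; destruct (stack_elim k Rs z p Hp) as (t & Ht & Hcol & Hh).
    exists (mid t); split.
    + apply closure_of_mem; split; [| exact (mid_chain t Ht)].
      apply (face_interior_brick t); [exact Ht | apply mid_region, Ht].
    + destruct (mid_in_brick t Ht); apply (visible_in_brick k Rs z t); auto.
Qed.

End WallFace.

(** * Type-1 contacts and the main theorem *)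

Lemma contact_type1_one_side (r r' : rect) :
  contact_type1 r r' ->
  exists moved : vaxis * bool, forall a s, (a, s) <> moved -> side a s r = side a s r'.
Proof.
  unfold contact_type1, canon_type1.
  intros [[_ H] | [_ H]]; destruct H as [H | [H | [H | H]]];
    [ exists (AxX, false) | exists (AxX, true) | exists (AxY, false) | exists (AxY, true)
    | exists (AxX, false) | exists (AxX, true) | exists (AxY, false) | exists (AxY, true) ];
    intros [] [] Hne; simpl; first [congruence | lra].
Qed.

Lemma side_avoiding_three (p1 p2 p3 : vaxis * bool) :
  exists p, p <> p1 /\ p <> p2 /\ p <> p3.
Proof.
  destruct p1 as [[] []], p2 as [[] []], p3 as [[] []];
    first [ exists (AxX, false); repeat split; discriminate
          | exists (AxX, true); repeat split; discriminate
          | exists (AxY, false); repeat split; discriminate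
          | exists (AxY, true); repeat split; discriminate ].
Qed.

Theorem mainTheorem11 (Rs : nat -> rect) (z : nat -> R) :
  stack_ok 4 Rs z ->
  (forall t : nat, (1 <= t <= 3)%nat -> contact_type1 (Rs t) (Rs (S t))) ->
  exists F : pt -> Prop, vertical_face (stack 4 Rs z) F /\ guards (stack 4 Rs z) F.
Proof.
  intros Hok Hc.
  destruct (contact_type1_one_side _ _ (Hc 1%nat ltac:(lia))) as [m1 H1].
  destruct (contact_type1_one_side _ _ (Hc 2%nat ltac:(lia))) as [m2 H2].
  destruct (contact_type1_one_side _ _ (Hc 3%nat ltac:(lia))) as [m3 H3].
  destruct (side_avoiding_three m1 m2 m3) as [[a s] (N1 & N2 & N3)].
  apply (wall_face_guards 4 Rs z a s (side a s (Rs 1%nat))); [exact Hok | | | lia].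
  - (* the side (a, s), moved by no contact, is common to all four rectangles *)
    specialize (H1 a s N1); specialize (H2 a s N2); specialize (H3 a s N3).
    intros t Ht; destruct t as [| [| [| [| [| t]]]]]; try lia; simpl; congruence.
  - intros t Ht; destruct (Hc t ltac:(lia)) as [[Hsub _] | [Hsub _]]; auto.
Qed.
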